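(* With $V$ satisfying (C1)–(C4), $\mathbb P(A):=V_A(1_\Omega)$, and $u^+$ as defined in the context, the map $T_{u^+}(f):=\int_\Omega u^+(\omega,f(\omega))\,\mathbb P(d\omega)$ is well defined and finite on $\mathcal L^\infty(\Omega,\mathcal F)$, monotone with respect to the pointwise order, pointwise continuous (if $(f_n)$ is uniformly bounded and $f_n\to f$ pointwise everywhere then $T_{u^+}(f_n)\to T_{u^+}(f)$), and satisfies $V_A(f)=T_{u^+}(f1_A)$ for every $f\in\mathcal L^\infty(\Omega,\mathcal F)$ and $A\in\mathcal F$.
   Context: $\mathcal L^\infty(\Omega,\mathcal F)$: bounded $\mathcal F$-measurable real functions; $V:\mathcal F\times\mathcal L^\infty(\Omega,\mathcal F)\to\mathbb R$, $(A,f)\mapsto V_A(f)$, with: (C1) for every $f$, $A\mapsto V_A(f)$ is a finite signed measure, $V_A(0)=0$, and $A\mapsto V_A(1_\Omega)$ is a probability measure; (C2) $V_A(f)=V_\Omega(f1_A)$; (C3) $f\le g$ pointwise implies $V_A(f)\le V_A(g)$, and $\mathbb P(A)>0$ implies $V_A(x)<V_A(y)$ for real $x<y$; (C4) $V_A(f_n)\to V_A(f)$ whenever $(f_n)$ is uniformly bounded and converges pointwise everywhere to $f$. For $q\in\mathbb Q$, $u(\cdot,q)$ is a version of $d\mu_q/d\mathbb P$, $\mu_q(A):=V_A(q)$, with $u(\cdot,0)\equiv0$. $\Theta:=\{\omega: u(\omega,q_1)<u(\omega,q_2)\ \forall q_1<q_2\in\mathbb Q\}\cap\{\omega: u(\omega,q)=\inf_{\tilde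 q\in\mathbb Q,\tilde q>q}u(\omega,\tilde q)\ \forall q\in\mathbb Q\}$, and $u^+(\omega,x):=\inf_{q\in\mathbb Q,q\ge x}\{u(\omega,q)1_\Theta(\omega)+x1_{\Omega\setminus\Theta}(\omega)\}$. *)

From HB Require Import structures.
From mathcomp Require Import all_boot all_order all_algebra.
From mathcomp Require Import all_classical all_reals all_analysis.
Set Implicit Arguments. Unset Strict Implicit. Unset Printing Implicit Defensive.
Import Order.TTheory GRing.Theory Num.Theory.
Import numFieldNormedType.Exports.
Local Open Scope classical_set_scope.
Local Open Scope ring_scope.

Section Defs.
Context {d : measure_display} {T : measurableType d} {R : realType}.

Definition Linf (f : T -> R) : Prop :=
  measurable_fun setT f /\ exists M : R, forall x, `|f x| <= M.

Definition Theta (u : T -> rat -> R) : set T :=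
  [set w | (forall q1 q2 : rat, q1 < q2 -> u w q1 < u w q2) /\
           (forall q : rat, u w q = inf [set u w q' | q' in [set q' : rat | q < q']])].

Definition uplus (u : T -> rat -> R) (w : T) (x : R) : R :=
  inf [set u w q * \1_(Theta u) w + x * \1_(~` Theta u) w
       | q in [set q : rat | x <= ratr q]].

Definition Tu (P : probability T R) (u : T -> rat -> R) (f : T -> R) : R :=
  fine (\int[P]_w (uplus u w (f w))%:E).

End Defs.

(* Since u(., q) is a density of A |-> V_A(q), strict monotonicity (C3) and continuity (C4)
   of q |-> V_A(q) force q |-> u(w, q) to be strictly increasing and right continuous for
   P-almost every w, i.e. Theta has full measure; on Theta, u^+(w, .) is the right-continuous
   extension of u(w, .) to the reals.  Additivity (C1) and locality (C2) give
   V_Omega(g) = int u^+(w, g w) dP for g with finitely many rational values.  Every bounded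
   measurable f is the limit from above of such functions (f rounded up to Z/(n+1)), so
   V_Omega(f) = T_{u^+}(f); monotonicity, continuity and the representation of V_A then
   follow from (C2)-(C4). *)

From HB Require Import structures.
From mathcomp Require Import all_boot all_order all_algebra.
From mathcomp Require Import all_classical all_reals all_analysis.
From mathcomp Require Import measurable_realfun.
From mathcomp Require Import zify lra.
Import Order.TTheory GRing.Theory Num.Theory.
Import numFieldNormedType.Exports.
Local Open Scope classical_set_scope.
Local Open Scope ring_scope.
Set Implicit Arguments. Unset Strict Implicit. Unset Printing Implicit Defensive.

Section rational_grid.
Variable R : realType.
Implicit Types x : R.

Lemma exists_ratr_ge x : exists q : rat, x <= ratr q.
Proof. by exists (Num.ceil x)%:~R; rewrite ratr_int ceil_ge. Qed.

Lemma exists_ratr_le x : exists q : rat, ratr q <= x.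
Proof. by exists (Num.floor x)%:~R; rewrite ratr_int; case/andP: (floor_itv x). Qed.

Definition ceil_grid (n : nat) (x : R) : R :=
  (Num.ceil (x * n.+1%:R))%:~R / n.+1%:R.

Lemma ceil_grid_bounds n x : x <= ceil_grid n x <= x + n.+1%:R^-1.
Proof.
have n0 : (0 : R) < n.+1%:R by rewrite ltr0Sn.
rewrite /ceil_grid ler_pdivlMr // ceil_ge /= ler_pdivrMr // mulrDl mulVf ?gt_eqF //.
by have := ceilB1_lt (x * n.+1%:R); rewrite intrB /=; lra.
Qed.

Lemma ceil_grid_norm_le n x M : `|x| <= M -> `|ceil_grid n x| <= M + 1.
Proof.
have /andP[lo hi] := ceil_grid_bounds n x.
have inv_le1 : n.+1%:R^-1 <= (1 : R) by rewrite invf_le1 ?ler1n ?ltr0Sn.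
rewrite !ler_norml => /andP[xlo xhi]; move: hi inv_le1.
by set t := n.+1%:R^-1 => hi t_le1; apply/andP; split; lra.
Qed.

Lemma cvg_ceil_grid x : (ceil_grid ^~ x) @ \oo --> x.
Proof.
apply: (@squeeze_cvgr _ _ _ _ (cst x) (fun n => x + harmonic n)).
- by apply: nearW => n; exact: ceil_grid_bounds.
- exact: cvg_cst.
- by rewrite -[X in _ --> X]addr0; apply: cvgD; [exact: cvg_cst | exact: cvg_harmonic].
Qed.

Lemma measurable_ceil_grid n : measurable_fun setT (ceil_grid n).
Proof.
have mceil : measurable_fun setT (fun x : R => (Num.ceil x)%:~R : R).
  by apply: nondecreasing_measurable => // x y xy; rewrite ler_int le_ceil.
apply: measurable_funM => //; apply: measurableT_comp mceil _.
exact: measurable_funM.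
Qed.

Lemma ceil_grid_finite n (M : R) :
  exists s : seq rat, forall x, `|x| <= M -> exists2 q, q \in s & ceil_grid n x = ratr q.
Proof.
set K := absz (Num.ceil (M * n.+1%:R)).
exists [seq (i%:Z - K%:Z)%:~R / n.+1%:R | i <- iota 0 (K + K).+1] => x.
rewrite ler_norml => /andP[xlo xhi]; set z := Num.ceil (x * n.+1%:R).
have zhi : z <= Num.ceil (M * n.+1%:R) by rewrite le_ceil // ler_wpM2r.
have zlo : - Num.ceil (M * n.+1%:R) <= z.
  rewrite -(ler_int R) intrN; apply: le_trans (ceil_ge _).
  apply: le_trans (_ : - (M * n.+1%:R) <= _); first by rewrite lerN2 ceil_ge.
  by rewrite -mulNr ler_wpM2r.
exists (z%:~R / n.+1%:R); last by rewrite /ceil_grid fmorph_div rmorph_int rmorph_nat.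
apply/mapP; exists (absz (z + K%:Z)); first by rewrite mem_iota; rewrite /K; lia.
by congr (_%:~R / _); rewrite /K; lia.
Qed.

End rational_grid.

Section uplus.
Context {d : measure_display} {T : measurableType d} {R : realType}.
Variable u : T -> rat -> R.
Implicit Types (w : T) (x y : R).

Definition u_above w x : set R := [set u w q | q in [set q : rat | x <= ratr q]].

Lemma uplus_Theta w x : Theta u w -> uplus u w x = inf (u_above w x).
Proof.
move=> Tw; rewrite /uplus !indicE mem_set // memNset; last by move/(_ Tw).
by congr inf; apply/seteqP; split => _ [q qx <-]; exists q => //=;
  rewrite mulr1 mulr0 addr0.
Qed.

Lemma uplus_notTheta w x : ~ Theta u w -> uplus u w x = x.
Proof.
move=> Tw; rewrite /uplus !indicE memNset // mem_set //.
have [q0 q0x] := exists_ratr_ge x.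
rewrite -[RHS]inf1; congr inf; apply/seteqP; split.
  by move=> _ [q qx <-]; rewrite /= mulr0 add0r mulr1.
by move=> _ ->; exists q0 => //=; rewrite mulr0 add0r mulr1.
Qed.

Lemma Theta_le w q1 q2 : Theta u w -> q1 <= q2 -> u w q1 <= u w q2.
Proof. by move=> [u_incr _]; rewrite le_eqVlt => /predU1P[-> //|/u_incr/ltW]. Qed.

Lemma has_inf_u_above w x : Theta u w -> has_inf (u_above w x).
Proof.
move=> Tw; split; first by have [q qx] := exists_ratr_ge x; exists (u w q), q.
have [q0 q0x] := exists_ratr_le x; exists (u w q0) => _ [q /= xq <-].
by apply: Theta_le => //; rewrite -(ler_rat R) (le_trans q0x xq).
Qed.

Lemma uplus_le_u w x q : Theta u w -> x <= ratr q -> uplus u w x <= u w q.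
Proof.
move=> Tw xq; rewrite uplus_Theta //.
by apply: ge_inf; [case: (has_inf_u_above x Tw) | exists q].
Qed.

Lemma u_le_uplus w x q : Theta u w -> ratr q <= x -> u w q <= uplus u w x.
Proof.
move=> Tw qx; rewrite uplus_Theta //; apply: lb_le_inf.
  by case: (has_inf_u_above x Tw).
move=> _ [q' /= xq' <-]; apply: Theta_le => //.
by rewrite -(ler_rat R) (le_trans qx xq').
Qed.

Lemma uplus_rat w q : Theta u w -> uplus u w (ratr q) = u w q.
Proof. by move=> Tw; apply/eqP; rewrite eq_le uplus_le_u ?u_le_uplus. Qed.

Lemma le_uplus w x y : Theta u w -> x <= y -> uplus u w x <= uplus u w y.
Proof.
move=> Tw xy; rewrite [uplus u w y]uplus_Theta //; apply: lb_le_inf.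
  by case: (has_inf_u_above y Tw).
by move=> _ [q /= yq <-]; apply: uplus_le_u => //; exact: le_trans yq.
Qed.

Lemma has_inf_u_right w q :
  (forall q1 q2, q1 < q2 -> u w q1 < u w q2) ->
  has_inf [set u w q' | q' in [set q' : rat | q < q']].
Proof.
move=> u_incr; split; first by exists (u w (q + 1)), (q + 1); rewrite //= ltrDl.
by exists (u w q) => _ [q' /= qq' <-]; exact/ltW/u_incr.
Qed.

(* When the infimum defining u^+ at x is attained at x = q itself,
   right continuity of u at q supplies a rational strictly to the right. *)
Lemma uplus_right_approx w x e : Theta u w -> 0 < e ->
  exists2 q : rat, x < ratr q & u w q < uplus u w x + e.
Proof.
move=> Tw e0; have [_ [q /= xq <-]] := inf_adherent e0 (has_inf_u_above x Tw).
rewrite -uplus_Theta //; have [xq_lt uq|xq_eq _] := ltP x (ratr q).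
  by exists q.
have {xq_eq}-> : x = ratr q by apply/eqP; rewrite eq_le xq.
have [u_incr u_rc] := Tw.
have [_ [q' /= qq' <-]] := inf_adherent e0 (has_inf_u_right q u_incr).
by rewrite -u_rc uplus_rat // => uq'; exists q'; rewrite ?ltr_rat.
Qed.

Lemma cvg_uplus_right w x (xn : R^nat) : (forall n, x <= xn n) ->
  xn @ \oo --> x -> (fun n => uplus u w (xn n)) @ \oo --> uplus u w x.
Proof.
move=> x_le xn_cvg; have [Tw|nTw] := pselect (Theta u w); last first.
  by rewrite uplus_notTheta //; under eq_fun do rewrite uplus_notTheta //.
apply/cvgrPdist_lt => e e0; have [q xq uq] := uplus_right_approx x Tw e0.
near=> n; rewrite distrC ger0_norm ?subr_ge0 ?le_uplus // ltrBlDl.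
apply: le_lt_trans uq; apply: uplus_le_u => //; apply: ltW.
by near: n; exact: cvgr_lt xn_cvg _ xq.
Unshelve. all: by end_near.
Qed.

Definition uplus_bound (N : rat) w : R := `|u w (- N)| + `|u w N| + ratr N.

Lemma uplus_norm_le w x (N : rat) : `|x| <= ratr N -> `|uplus u w x| <= uplus_bound N w.
Proof.
move=> xN; have uN0 := normr_ge0 (u w (- N)); have uN1 := normr_ge0 (u w N).
rewrite /uplus_bound; have [Tw|nTw] := pselect (Theta u w); last first.
  by rewrite uplus_notTheta //; apply: le_trans xN _; rewrite lerDr.
move: xN; rewrite ler_norml => /andP[Nx xN].
have lo := u_le_uplus Tw (_ : ratr (- N) <= x); rewrite rmorphN in lo.
have hi := uplus_le_u Tw xN; have := lo Nx.
have := ler_norm (u w N); have := ler_norm (- u w (- N)); rewrite normrN.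
by rewrite ler_norml; lra.
Qed.

End uplus.

Section exceptional_set.
Context {d : measure_display} {T : measurableType d} {R : realType}.

Lemma measurable_ler_set (f g : T -> R) : measurable_fun setT f ->
  measurable_fun setT g -> measurable [set w | f w <= g w].
Proof.
by move=> mf mg; rewrite -[X in measurable X]setTI;
  apply: (measurable_fun_ler mf mg measurableT (_ : measurable [set true])).
Qed.

Lemma measurable_ltr_set (f g : T -> R) : measurable_fun setT f ->
  measurable_fun setT g -> measurable [set w | f w < g w].
Proof.
by move=> mf mg; rewrite -[X in measurable X]setTI;
  apply: (measurable_fun_ltr mf mg measurableT (_ : measurable [set true])).
Qed.

Variable u : T -> rat -> R.

Definition not_incr_set (q1 q2 : rat) : set T :=
  if q1 < q2 then [set w | u w q2 <= u w q1] else set0.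

Definition right_jump_set (q : rat) (k : nat) : set T :=
  \bigcap_(q' in [set q' : rat | q < q']) [set w | u w q + k.+1%:R^-1 <= u w q'].

Definition exceptional_set : set T :=
  (\bigcup_q1 \bigcup_q2 not_incr_set q1 q2) `|`
  (\bigcup_q \bigcup_k right_jump_set q k).

Lemma Theta_exceptional : Theta u = ~` exceptional_set.
Proof.
apply/seteqP; split => w.
  move=> [u_incr u_rc] [[q1 _ [q2 _]]|[q _ [k _ jump]]].
    by rewrite /not_incr_set; case: ifP => // /u_incr; rewrite /= ltNge => /negP.
  have k0 : (0 : R) < k.+1%:R^-1 by rewrite invr_gt0.
  have [_ [q' /= qq' <-]] := inf_adherent k0 (has_inf_u_right q u_incr).
  by rewrite -u_rc ltNge jump.
move=> notE; have u_incr q1 q2 : q1 < q2 -> u w q1 < u w q2.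
  move=> q12; rewrite ltNge; apply/negP => uq21; apply: notE; left.
  by exists q1 => //; exists q2; rewrite // /not_incr_set q12.
split => // q; have [ne lb] := has_inf_u_right q u_incr.
apply/eqP; rewrite eq_le; apply/andP; split.
  by apply: lb_le_inf => // _ [q' /= qq' <-]; exact/ltW/u_incr.
apply/ler_addgt0Pr => e e0.
have [k _ /(_ k (leqnn k)) ke] := near_infty_natSinv_lt (PosNum e0).
have [q' qq' uq'] : exists2 q', q < q' & u w q' < u w q + k.+1%:R^-1.
  apply: contrapT => no_q'; apply: notE; right; exists q => //; exists k => // q' qq'.
  by rewrite /= leNgt; apply/negP => uq'; apply: no_q'; exists q'.
have inf_le : inf [set u w q' | q' in [set q' : rat | q < q']] <= u w q'.
  by apply: ge_inf => //; exists q'.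
by rewrite (le_trans inf_le) // (le_trans (ltW uq')) // lerD2l ltW.
Qed.

Hypothesis u_meas : forall q, measurable_fun setT (fun w => u w q).

Lemma measurable_not_incr_set q1 q2 : measurable (not_incr_set q1 q2).
Proof. by rewrite /not_incr_set; case: ifP => // _; exact: measurable_ler_set. Qed.

Lemma measurable_right_jump_set q k : measurable (right_jump_set q k).
Proof.
rewrite /right_jump_set -[X in measurable X]setCK setC_bigcap; apply: measurableC.
rewrite bigcup_mkcond; apply: bigcupT_measurable_rat => q'.
case: ifP => // _; apply/measurableC/measurable_ler_set => //.
exact: measurable_funD.
Qed.

Lemma measurable_Theta : measurable (Theta u).
Proof.
rewrite Theta_exceptional; apply/measurableC/measurableU.
  apply: bigcupT_measurable_rat => q1; apply: bigcupT_measurable_rat => q2.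
  exact: measurable_not_incr_set.
apply: bigcupT_measurable_rat => q; apply: bigcupT_measurable => k.
exact: measurable_right_jump_set.
Qed.

Lemma measurable_uplus (g : T -> R) : measurable_fun setT g ->
  measurable_fun setT (fun w => uplus u w (g w)).
Proof.
move=> mg _; apply: (measurability _ (RGenInftyO.measurableE R)) => //.
move=> _ [_ [c ->] <-].
have -> : setT `&` (fun w => uplus u w (g w)) @^-1` `]-oo, c[ =
    (~` Theta u `&` [set w | g w < c]) `|`
    (Theta u `&` \bigcup_q ([set w | g w <= ratr q] `&` [set w | u w q < c])).
  apply/seteqP; split => w /=; rewrite in_itv /=.
    move=> [_ uplus_lt]; have [Tw|nTw] := pselect (Theta u w); last first.
      by left; rewrite -(uplus_notTheta (g w) nTw).
    rewrite uplus_Theta // in uplus_lt; right; split => //.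
    have [ne _] := has_inf_u_above (g w) Tw.
    by have [_ [q /= gq <-] uq] := inf_lt ne uplus_lt; exists q.
  move=> [[nTw gc]|[Tw [q _ [gq uq]]]]; split => //; first by rewrite uplus_notTheta.
  exact: le_lt_trans (uplus_le_u Tw gq) uq.
apply: measurableU; apply: measurableI.
- exact/measurableC/measurable_Theta.
- exact: measurable_ltr_set.
- exact: measurable_Theta.
apply: bigcupT_measurable_rat => q.
by apply: measurableI; [exact: measurable_ler_set | exact: measurable_ltr_set].
Qed.

End exceptional_set.

Lemma negligible_bigcup_rat d (T : sigmaRingType d) (R : realFieldType)
    (mu : {measure set T -> \bar R}) (F : rat -> set T) :
  (forall q, mu.-negligible (F q)) -> mu.-negligible (\bigcup_q F q).
Proof.
move=> F0; have -> : \bigcup_q F q = \bigcup_n F (odflt 0 (unpickle n)).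
  apply/seteqP; split => [w [q _ Fw]|w [n _ Fw]]; last by exists (odflt 0 (unpickle n)).
  by exists (pickle q) => //; rewrite pickleK.
exact: negligible_bigcup.
Qed.

Section Linf.
Context {d : measure_display} {T : measurableType d} {R : realType}.

Lemma Linf_cst (c : R) : Linf (fun _ : T => c).
Proof. by split; [exact: measurable_cst | exists `|c|]. Qed.

Lemma Linf_mul_indic (f : T -> R) A : Linf f -> measurable A ->
  Linf (fun w => f w * \1_A w).
Proof.
move=> [mf [M fM]] mA; split; first exact/measurable_funM/measurable_indic.
exists M => w; rewrite normrM indicE; apply: le_trans (fM w).
by case: (w \in A); rewrite ?normr1 ?normr0 ?mulr1 ?mulr0.
Qed.

Lemma Linf_ceil_grid n (g : T -> R) : Linf g -> Linf (fun w => ceil_grid n (g w)).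
Proof.
move=> [mg [M gM]]; split; first exact: measurableT_comp (measurable_ceil_grid n) mg.
by exists (M + 1) => w; exact/ceil_grid_norm_le/gM.
Qed.

End Linf.

Section representation.
Context {d : measure_display} {T : measurableType d} {R : realType}.
Variables (V : set T -> (T -> R) -> R) (P : probability T R) (u : T -> rat -> R).
Hypothesis C1_sigma : forall f, Linf f -> forall A : nat -> set T,
  (forall n, measurable (A n)) -> trivIset setT A ->
  (fun n => \sum_(i < n) V (A i) f) @ \oo --> V (\bigcup_n A n) f.
Hypothesis C1_empty : forall f, Linf f -> V set0 f = 0.
Hypothesis C1_prob_nonneg : forall A, measurable A -> 0 <= V A (fun _ => 1).
Hypothesis HP : forall A, measurable A -> P A = (V A (fun _ => 1))%:E.
Hypothesis C2 : forall A f, measurable A -> Linf f ->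
  V A f = V setT (fun w => f w * \1_A w).
Hypothesis C3_strict : forall A (x y : R), measurable A -> (0 < P A)%E -> x < y ->
  V A (fun _ => x) < V A (fun _ => y).
Hypothesis C4 : forall A (fn : nat -> T -> R) (f : T -> R), measurable A ->
  (forall n, Linf (fn n)) -> Linf f ->
  (exists M : R, forall n w, `|fn n w| <= M) ->
  (forall w, (fun n => fn n w) @ \oo --> f w) ->
  (fun n => V A (fn n)) @ \oo --> V A f.
Hypothesis Hu_meas : forall q : rat, measurable_fun setT (fun w => u w q).
Hypothesis Hu_int : forall q : rat, P.-integrable setT (fun w => (u w q)%:E).
Hypothesis Hu_RN : forall (q : rat) A, measurable A ->
  (V A (fun _ => ratr q))%:E = (\int[P]_(w in A) (u w q)%:E)%E.

Let integrable_u q A : measurable A -> P.-integrable A (fun w => (u w q)%:E).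
Proof. by move=> mA; apply: integrableS (Hu_int q). Qed.

Lemma V_setU A B f : measurable A -> measurable B -> A `&` B = set0 -> Linf f ->
  V (A `|` B) f = V A f + V B f.
Proof.
move=> mA mB AB0 lf; have mAB n : measurable (bigcup2 A B n).
  by rewrite /bigcup2; case: ifP => // _; case: ifP.
have := C1_sigma lf mAB; rewrite bigcup2E -trivIset_bigcup2 => /(_ AB0) cvg_sum.
have cvg_AB : (fun n => \sum_(i < n) V (bigcup2 A B i) f) @ \oo --> V A f + V B f.
  apply: cvg_near_cst; near=> n; have n2 : (2 <= n)%N by near: n; exists 2%N.
  rewrite -(subnKC n2) big_split_ord /= !big_ord_recl big_ord0 /= addr0.
  by rewrite big1 ?addr0 // => i _; rewrite /bigcup2 /= C1_empty.
exact: cvg_unique _ cvg_sum cvg_AB.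
Unshelve. all: by end_near.
Qed.

Lemma V_eq_on A f g : measurable A -> Linf f -> Linf g ->
  (forall w, A w -> f w = g w) -> V A f = V A g.
Proof.
move=> mA lf lg fg; rewrite C2 // [RHS]C2 //; congr (V setT _).
apply: funext => w; rewrite indicE; case: (boolP (w \in A)) => [/set_mem Aw|_].
  by rewrite fg.
by rewrite !mulr0.
Qed.

Lemma not_incr_set_null q1 q2 : P (not_incr_set u q1 q2) = 0%E.
Proof.
have mB := measurable_not_incr_set Hu_meas q1 q2.
move: mB; rewrite /not_incr_set; case: ifPn => [q12 mB|_ _]; last exact: measure0.
apply/eqP; rewrite eq_le measure_ge0 andbT leNgt; apply/negP => PB_gt0.
have := C3_strict mB PB_gt0 (_ : ratr q1 < ratr q2); rewrite ltr_rat => /(_ q12).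
apply/negP; rewrite -leNgt -lee_fin !Hu_RN //.
by apply: le_integral => //; [exact: integrable_u | exact: integrable_u |
  move=> w; rewrite inE lee_fin].
Qed.

(* On B, u(., q + 1/(n+1)) >= u(., q) + 1/(k+1) for all n, so
   V_B(q + 1/(n+1)) >= V_B(q) + P(B)/(k+1), while by (C4) the left side tends to V_B(q). *)
Lemma right_jump_set_null q k : P (right_jump_set u q k) = 0%E.
Proof.
set B := right_jump_set u q k; have mB : measurable B := measurable_right_jump_set Hu_meas q k.
set c : R := k.+1%:R^-1; have c0 : 0 < c by rewrite invr_gt0.
pose qn n : rat := q + n.+1%:R^-1.
have jump n : V B (fun=> ratr q) + c * V B (fun=> 1) <= V B (fun=> ratr (qn n)).
  rewrite -lee_fin EFinD EFinM -HP // !Hu_RN // -integral_cst // -integralD //;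
    [|exact: integrable_u | exact: finite_measure_integrable_cst].
  apply: le_integral => //.
  - exact/integrableD/finite_measure_integrable_cst/mB/integrable_u.
  - exact: integrable_u.
  - by move=> w /set_mem Bw; rewrite /= lee_fin; apply: Bw; rewrite /= ltrDl invr_gt0.
have qn_cvg : (fun n => V B (fun=> ratr (qn n))) @ \oo --> V B (fun=> ratr q).
  apply: C4 => //; [move=> n; exact: Linf_cst | exact: Linf_cst | |].
    exists (`|ratr q| + 1) => n w; rewrite rmorphD /= fmorphV rmorph_nat.
    apply: le_trans (ler_normD _ _) _; rewrite lerD2l.
    by rewrite ger0_norm ?invr_ge0 // invf_le1 // ler1n.
  move=> w; have -> : (fun n => ratr (qn n) : R) = (fun n => ratr q + harmonic n).
    by apply: funext => n; rewrite rmorphD /= fmorphV rmorph_nat.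
  rewrite -[X in _ --> X]addr0; apply: cvgD; [exact: cvg_cst | exact: cvg_harmonic].
have := cvgr_to_ge qn_cvg (nearW _ jump).
rewrite -lerBrDl subrr pmulr_rle0 // => PB_le0.
by rewrite HP //; congr (_%:E); apply/eqP; rewrite eq_le PB_le0 C1_prob_nonneg.
Qed.

Lemma negligible_not_Theta : P.-negligible (~` Theta u).
Proof.
rewrite Theta_exceptional setCK; apply: negligibleU.
  apply: negligible_bigcup_rat => q1; apply: negligible_bigcup_rat => q2.
  apply/negligibleP; [exact: measurable_not_incr_set | exact: not_incr_set_null].
apply: negligible_bigcup_rat => q; apply: negligible_bigcup => k.
apply/negligibleP; [exact: measurable_right_jump_set | exact: right_jump_set_null].
Qed.


Lemma integrable_uplus_bound N : P.-integrable setT (fun w => (uplus_bound u N w)%:E).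
Proof.
apply: (@integrableD _ _ _ P setT measurableT
  (fun w => (`|u w (- N)| + `|u w N|)%:E) (EFin \o cst (ratr N))); last first.
  exact: finite_measure_integrable_cst.
apply: (@integrableD _ _ _ P setT measurableT
  (EFin \o (Num.norm \o u^~ (- N))) (EFin \o (Num.norm \o u^~ N))).
  exact: integrable_norm (Hu_int (- N)).
exact: integrable_norm (Hu_int N).
Qed.

Lemma measurable_uplusE g : Linf g -> measurable_fun setT (fun w => (uplus u w (g w))%:E).
Proof. by move=> [mg _]; apply/measurable_EFinP/measurable_uplus. Qed.

Lemma integrable_uplus g : Linf g -> P.-integrable setT (fun w => (uplus u w (g w))%:E).
Proof.
move=> lg; have [_ [M gM]] := lg; have [N MN] := exists_ratr_ge `|M|.
have gN w : `|g w| <= ratr N := le_trans (gM w) (le_trans (ler_norm M) MN).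
apply: (le_integrable measurableT (measurable_uplusE lg) _ (integrable_uplus_bound N)).
move=> w _ /=; have bound := uplus_norm_le u w (gN w).
by rewrite lee_fin (ger0_norm (le_trans (normr_ge0 _) bound)).
Qed.

Lemma V_uplus_level_set B g q : measurable B -> Linf g -> (forall w, B w -> g w = ratr q) ->
  (V B g)%:E = (\int[P]_(w in B) (uplus u w (g w))%:E)%E.
Proof.
move=> mB lg gq; rewrite (V_eq_on mB lg (Linf_cst (ratr q)) gq) Hu_RN //.
apply: ae_eq_integral => //.
- by apply/measurable_EFinP; apply: measurable_funS (Hu_meas q).
- exact: measurable_funS (measurable_uplusE lg).
apply: negligibleS negligible_not_Theta => w /= eq_fails; apply: contra_not eq_fails.
by move=> Tw Bw; rewrite gq // uplus_rat.
Qed.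

Lemma V_uplus_rat_valued (s : seq rat) A g : measurable A -> Linf g ->
  (forall w, A w -> exists2 q, q \in s & g w = ratr q) ->
  (V A g)%:E = (\int[P]_(w in A) (uplus u w (g w))%:E)%E.
Proof.
elim: s A => [|q s IH] A mA lg g_vals.
  have -> : A = set0 by apply/seteqP; split => // w /g_vals [q]; rewrite in_nil.
  by rewrite C1_empty // integral_set0.
have mE : measurable [set w | g w = ratr q].
  by have := lg.1 measurableT [set ratr q] (measurable_set1 _); rewrite setTI.
set B := A `&` [set w | g w = ratr q]; set C := A `&` ~` [set w | g w = ratr q].
have mB : measurable B by exact: measurableI.
have mC : measurable C by apply: measurableI => //; exact: measurableC.
have BC0 : B `&` C = set0 by rewrite setIACA setICr setI0.
have -> : A = B `|` C by rewrite -setIUr setUCr setIT.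
rewrite V_setU // EFinD integral_setU //; last 2 first.
- exact: measurable_funS (measurable_uplusE lg).
- by rewrite /disj_set BC0.
congr (_ + _)%E; first by apply: (V_uplus_level_set (q := q)) => // w [].
apply: IH => // w [Aw gw]; have [q' q's gq'] := g_vals w Aw.
exists q' => //; move: q's; rewrite in_cons => /predU1P[qq'|//].
by case: gw; rewrite /= gq' qq'.
Qed.

(* Round g up to the grid Z/(n+1): (C4) handles the left-hand side, right continuity
   of u^+ and dominated convergence the right-hand side. *)
Lemma V_setT_uplus g : Linf g -> (V setT g)%:E = (\int[P]_w (uplus u w (g w))%:E)%E.
Proof.
move=> lg; have [_ [M gM]] := lg; have [N MN] := exists_ratr_ge (M + 1).
pose gn n w := ceil_grid n (g w).
have gnN n w : `|gn n w| <= ratr N := le_trans (ceil_grid_norm_le _ (gM w)) MN.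
have cvg_V : (fun n => (V setT (gn n))%:E) @ \oo --> (V setT g)%:E.
  apply: cvg_EFin; first exact: nearW.
  apply: (C4 measurableT) => //; [move=> n; exact: Linf_ceil_grid | by exists (ratr N) |].
  by move=> w; exact: cvg_ceil_grid.
have cvg_uplus w : [set: T] w ->
    (fun n => (uplus u w (gn n w))%:E) @ \oo --> (uplus u w (g w))%:E.
  move=> _; apply: cvg_EFin; first exact: nearW.
  by apply: cvg_uplus_right; [move=> n; case/andP: (ceil_grid_bounds n (g w)) |
    exact: cvg_ceil_grid].
have dominated w n : [set: T] w -> (`|(uplus u w (gn n w))%:E| <= (uplus_bound u N w)%:E)%E.
  by move=> _; rewrite lee_fin; exact: uplus_norm_le.
have [_ _ cvg_int] := dominated_convergence measurableT
  (fun n => measurable_uplusE (Linf_ceil_grid n lg)) (measurable_uplusE lg)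
  (aeW _ cvg_uplus) (integrable_uplus_bound N) (aeW _ dominated).
have V_gn : (fun n => (V setT (gn n))%:E) =
    (fun n => \int[P]_(w in setT) (uplus u w (gn n w))%:E)%E.
  apply: funext => n; have [s s_vals] := ceil_grid_finite n M.
  apply: V_uplus_rat_valued => // [|w _]; [exact: Linf_ceil_grid | exact: s_vals].
by rewrite V_gn in cvg_V; exact: cvg_unique _ cvg_V cvg_int.
Qed.

Lemma Tu_V g : Linf g -> Tu P u g = V setT g.
Proof. by move=> lg; rewrite /Tu -V_setT_uplus. Qed.

End representation.

Theorem mainTheorem11 (d : measure_display) (T : measurableType d) (R : realType)
  (V : set T -> (T -> R) -> R) (P : probability T R) (u : T -> rat -> R)
  (C1_sigma : forall f, Linf f -> forall A : nat -> set T,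
      (forall n, measurable (A n)) -> trivIset setT A ->
      (fun n => \sum_(i < n) V (A i) f) @ \oo --> V (\bigcup_n A n) f)
  (C1_empty : forall f, Linf f -> V set0 f = 0)
  (C1_zero : forall A, measurable A -> V A (fun _ => 0) = 0)
  (C1_prob_nonneg : forall A, measurable A -> 0 <= V A (fun _ => 1))
  (C1_prob_total : V setT (fun _ => 1) = 1)
  (HP : forall A, measurable A -> P A = (V A (fun _ => 1))%:E)
  (C2 : forall A f, measurable A -> Linf f ->
      V A f = V setT (fun w => f w * \1_A w))
  (C3_mono : forall A f g, measurable A -> Linf f -> Linf g ->
      (forall w, f w <= g w) -> V A f <= V A g)
  (C3_strict : forall A (x y : R), measurable A -> (0 < P A)%E -> x < y ->
      V A (fun _ => x) < V A (fun _ => y))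
  (C4 : forall A (fn : nat -> T -> R) (f : T -> R), measurable A ->
      (forall n, Linf (fn n)) -> Linf f ->
      (exists M : R, forall n w, `|fn n w| <= M) ->
      (forall w, (fun n => fn n w) @ \oo --> f w) ->
      (fun n => V A (fn n)) @ \oo --> V A f)
  (Hu_meas : forall q : rat, measurable_fun setT (fun w => u w q))
  (Hu_int : forall q : rat, P.-integrable setT (fun w => (u w q)%:E))
  (Hu_RN : forall (q : rat) A, measurable A ->
      (V A (fun _ => ratr q))%:E = (\int[P]_(w in A) (u w q)%:E)%E)
  (Hu0 : forall w, u w 0 = 0) :
  (forall f, Linf f -> P.-integrable setT (fun w => (uplus u w (f w))%:E)) /\
  (forall f g, Linf f -> Linf g -> (forall w, f w <= g w) -> Tu P u f <= Tu P u g) /\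
  (forall (fn : nat -> T -> R) (f : T -> R),
      (forall n, Linf (fn n)) -> Linf f ->
      (exists M : R, forall n w, `|fn n w| <= M) ->
      (forall w, (fun n => fn n w) @ \oo --> f w) ->
      (fun n => Tu P u (fn n)) @ \oo --> Tu P u f) /\
  (forall f A, Linf f -> measurable A -> V A f = Tu P u (fun w => f w * \1_A w)).
Proof.
have TuV g : Linf g -> Tu P u g = V setT g by move=> lg; apply: Tu_V.
split; first by move=> f lf; apply: integrable_uplus.
split; first by move=> f g lf lg fg; rewrite !TuV //; exact: C3_mono.
split; last by move=> f A lf mA; rewrite TuV; [exact: C2 | exact: Linf_mul_indic].
move=> fn f lfn lf fn_bounded fn_cvg; rewrite TuV //.
by under eq_fun do rewrite TuV //; exact: C4.
Qed.
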